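(* Let $\mathbf{A}\in\mathbb{Z}^{m\times n}$ have at least one nonzero entry in every row and column, and let $\mathbf{A}^{Z}=\begin{pmatrix}\mathbf{A} & -\mathbf{A}\mathbf{1}\end{pmatrix}\in\mathbb{Z}^{m\times(n+1)}$, where $\mathbf{1}\in\mathbb{R}^n$ is the all-ones vector. Then there is an absolute constant $C$ such that $\kappa(\mathbf{A}^{Z})\le C\,n^{3/2}\,\kappa(\mathbf{A})$.
   Context: For a nonzero matrix $\mathbf{M}$, $\kappa(\mathbf{M})=\sigma_{\max}(\mathbf{M})/\sigma_{\min}(\mathbf{M})$, where $\sigma_{\max}$ is the largest singular value and $\sigma_{\min}$ the smallest nonzero singular value. *)

From mathcomp Require Import all_boot all_order all_algebra.
From mathcomp Require Import reals polyrcf.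
Set Implicit Arguments. Unset Strict Implicit. Unset Printing Implicit Defensive.
Import Order.TTheory GRing.Theory Num.Theory.
Local Open Scope ring_scope.

(* Squares of the nonzero singular values of M : the positive eigenvalues of
   M^T M, i.e. the positive real roots of its characteristic polynomial
   (rootsR lists the distinct real roots, sorted increasingly). *)
Definition sv_sq (R : realType) (m n : nat) (M : 'M[R]_(m, n)) : seq R :=
  [seq x <- rootsR (char_poly (M^T *m M)) | 0 < x].

Definition sigma_max (R : realType) (m n : nat) (M : 'M[R]_(m, n)) : R :=
  Num.sqrt (\big[Num.max/0]_(x <- sv_sq M) x).

Definition sigma_min (R : realType) (m n : nat) (M : 'M[R]_(m, n)) : R :=
  Num.sqrt (\big[Num.min/head 0 (sv_sq M)]_(x <- sv_sq M) x).

Definition kappa (R : realType) (m n : nat) (M : 'M[R]_(m, n)) : R :=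
  sigma_max M / sigma_min M.

Definition AZ (m n : nat) (A : 'M[int]_(m, n)) : 'M[int]_(m, n + 1) :=
  row_mx A (- (A *m const_mx 1)).

Definition mxZtoR (R : realType) (m n : nat) (A : 'M[int]_(m, n)) : 'M[R]_(m, n) :=
  map_mx (fun z : int => z%:~R) A.

From mathcomp Require Import all_boot all_order all_algebra.
From mathcomp Require Import reals polyrcf complex sesquilinear spectral.
From mathcomp Require Import lra.
Import Order.TTheory GRing.Theory Num.Theory.
Local Open Scope ring_scope.
Local Open Scope sesquilinear_scope.

Set Implicit Arguments. Unset Strict Implicit. Unset Printing Implicit Defensive.

(* Write A^Z = A B with B = (I | -1), so that the squared singular values of
   A^Z are the positive eigenvalues of B^T G B, where G = A^T A.  If
   v (B^T G B) = mu v with mu > 0, then x = v B^T satisfies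
   x G x^T = mu |v|^2.  The Rayleigh bound x G x^T <= lambda_max(G) |x|^2
   together with |v B^T|^2 <= 2n |v|^2 gives mu <= 2n lambda_max(G).  Since
   B B^T = I + J >= I (J the all-ones matrix), also
   lambda_min(G) x G x^T <= |x G|^2 <= |x G B|^2 = mu x G x^T,
   so lambda_min(G) <= mu.  Hence kappa(A^Z) <= sqrt(2n) kappa(A), and
   sqrt(2n) <= 2 n^(3/2). *)

Lemma diag_mxX (F : pzSemiRingType) n (e : 'rV[F]_n) k :
  diag_mx e ^+ k = diag_mx (\row_j e 0 j ^+ k).
Proof.
elim: k => [|k IHk].
  rewrite expr0 -idmxE -diag_const_mx; congr diag_mx.
  by apply/rowP => j; rewrite !mxE.
rewrite exprS IHk -mulmxE mulmx_diag; congr diag_mx.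
by apply/rowP => j; rewrite !mxE exprS.
Qed.

Section PositiveSpectrum.
Variable R : realType.

Definition pos_eigs n (S : 'M[R]_n) : seq R :=
  [seq x <- rootsR (char_poly S) | 0 < x].

Definition lambda_max n (S : 'M[R]_n) : R := \big[Num.max/0]_(x <- pos_eigs S) x.

Definition lambda_min n (S : 'M[R]_n) : R :=
  \big[Num.min/head 0 (pos_eigs S)]_(x <- pos_eigs S) x.

Lemma kappaE m n (M : 'M[R]_(m, n)) :
  kappa M = Num.sqrt (lambda_max (M^T *m M)) / Num.sqrt (lambda_min (M^T *m M)).
Proof. by []. Qed.

Lemma kappa_ge0 m n (M : 'M[R]_(m, n)) : 0 <= kappa M.
Proof. by rewrite divr_ge0 ?sqrtr_ge0. Qed.

Variables (n : nat) (S : 'M[R]_n).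

Lemma mem_pos_eigs a : (a \in pos_eigs S) = (0 < a) && eigenvalue S a.
Proof.
have S_char_neq0 : char_poly S != 0 by rewrite monic_neq0 ?char_poly_monic.
by rewrite mem_filter eigenvalue_root_char -(roots_on_rootsR S_char_neq0).
Qed.

Lemma pos_eigs_gt0 a : a \in pos_eigs S -> 0 < a.
Proof. by rewrite mem_pos_eigs => /andP[]. Qed.

Lemma lambda_max_ge0 : 0 <= lambda_max S.
Proof. exact: bigmax_ge_id. Qed.

Lemma eigenvalue_le_lambda_max a : eigenvalue S a -> a <= lambda_max S.
Proof.
move=> eig_a; have [a_gt0 | a_le0] := ltP 0 a.
  by apply: le_bigmax_seq => //; rewrite mem_pos_eigs a_gt0.
exact: le_trans a_le0 lambda_max_ge0.
Qed.

Lemma lambda_min_ge0 : 0 <= lambda_min S.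
Proof.
rewrite /lambda_min big_seq; apply: le_bigmin => [|a /pos_eigs_gt0/ltW //].
by case E: (pos_eigs S) => [//|a s] /=; apply/ltW/pos_eigs_gt0; rewrite E mem_head.
Qed.

Lemma lambda_min_gt0 : pos_eigs S != [::] -> 0 < lambda_min S.
Proof.
case E: (pos_eigs S) => [//|a s] _; rewrite /lambda_min big_seq E /=.
by apply: lt_bigmin => [|b b_in]; apply: pos_eigs_gt0; rewrite E ?mem_head.
Qed.

Lemma lambda_min_le_eigenvalue a : 0 < a -> eigenvalue S a -> lambda_min S <= a.
Proof. by move=> a_gt0 eig_a; apply: ge_bigmin_seq; rewrite // mem_pos_eigs a_gt0. Qed.

End PositiveSpectrum.

Section SymmetricSpectral.
Variable R : realType.
Local Notation toC := (real_complex R).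

Definition sqnorm n (x : 'rV[R]_n) : R := (x *m x^T) 0 0.

Lemma sqnormE n (x : 'rV[R]_n) : sqnorm x = \sum_i x 0 i ^+ 2.
Proof. by rewrite /sqnorm mxE; apply: eq_bigr => i _; rewrite mxE expr2. Qed.

Lemma sqnorm_ge0 n (x : 'rV[R]_n) : 0 <= sqnorm x.
Proof. by rewrite sqnormE sumr_ge0 // => i _; rewrite sqr_ge0. Qed.

Lemma sqnorm_gt0 n (x : 'rV[R]_n) : x != 0 -> 0 < sqnorm x.
Proof.
move=> x_neq0; have [j xj_neq0] : exists j, x 0 j != 0.
  apply/existsP; apply: contraNT x_neq0 => /existsPn x0.
  by apply/eqP/rowP => j; rewrite mxE; apply/eqP/negbNE.
rewrite sqnormE (bigD1 j) //= ltr_pwDl ?exprn_even_gt0 //.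
by rewrite sumr_ge0 // => i _; rewrite sqr_ge0.
Qed.

(* mathcomp's spectral theorem is stated over a numClosedFieldType, so a
   real symmetric matrix is diagonalized over R[i]. *)
Lemma symmetric_unitary_diag n (S : 'M[R]_n) : S^T = S ->
  exists2 P : 'M[R[i]]_n, P \is unitarymx &
    exists d : 'rV[R]_n, map_mx toC S = P^t* *m diag_mx (map_mx toC d) *m P.
Proof.
move=> S_sym; set A := map_mx toC S.
have A_herm : A \is hermsymmx.
  apply: realsym_hermsym.
    by apply/is_hermitianmxP; rewrite expr0 scale1r /A map_mx_id // map_trmx S_sym.
  by apply/mxOverP => i j; rewrite mxE; apply/complex_realP; eexists.
have /orthomx_spectralP A_diag := hermitian_normalmx A_herm.
have d_real := hermitian_spectral_diag_real A_herm.
exists (spectralmx A); first exact: spectral_unitarymx.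
exists (map_mx (@complex.Re R) (spectral_diag A)).
have -> : map_mx toC (map_mx (@complex.Re R) (spectral_diag A)) = spectral_diag A.
  by apply/rowP => j; rewrite !mxE RRe_real //; apply: (mxOverP d_real).
by rewrite -invmx_unitary ?spectral_unitarymx.
Qed.

Lemma symmetric_qform_spectral n (S : 'M[R]_n) : S^T = S ->
  exists d : 'rV[R]_n, (forall i, eigenvalue S (d 0 i)) /\
  forall x : 'rV[R]_n, exists2 w : 'I_n -> R, (forall i, 0 <= w i) &
    forall k, (x *m S ^+ k *m x^T) 0 0 = \sum_i d 0 i ^+ k * w i.
Proof.
move=> /symmetric_unitary_diag[P P_unitary [d S_diag]].
have P_unit := unitarymx_unit P_unitary.
have PPt : P *m P^t* = 1%:M by apply/unitarymxP.
have PtP : P^t* *m P = 1%:M by rewrite -invmx_unitary // mulVmx.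
exists d; split=> [i|x].
  rewrite -(eigenvalue_map toC) S_diag; apply/eigenvalueP.
  exists (delta_mx 0 i *m P).
    rewrite !mulmxA -[_ *m P^t*]mulmxA PPt mulmx1.
    by rewrite -[delta_mx _ _ *m diag_mx _]rowE row_diag_mx mxE scalemxAl.
  rewrite mulmx_free_eq0 ?row_free_unit //.
  by apply/eqP => /rowP/(_ i)/eqP; rewrite !mxE !eqxx oner_eq0.
set xC := map_mx toC x; set y := xC *m P^t*.
exists (fun i => complex.Re (y 0 i) ^+ 2 + complex.Im (y 0 i) ^+ 2).
  by move=> i; rewrite addr_ge0 ?sqr_ge0.
have yt : P *m xC^T = y^t*.
  rewrite /y trmx_mul map_mxM trmxCK; congr (_ *m _).
  by apply/matrixP => i j; rewrite !mxE; apply/esym/conj_Creal/complex_realP; eexists.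
have yE : xC *m P^t* = y by [].
clearbody y.
have SkE k : map_mx toC (S ^+ k) = P^t* *m diag_mx (map_mx toC d) ^+ k *m P.
  elim: k => [|k IHk]; first by rewrite !expr0 -!idmxE map_mx1 mulmx1.
  rewrite !exprS -!mulmxE map_mxM IHk S_diag !mulmxA.
  by rewrite -[P^t* *m _ *m P *m P^t*]mulmxA PPt mulmx1.
move=> k; apply: (@complexI R); rewrite rmorph_sum /=.
have -> : toC ((x *m S ^+ k *m x^T) 0 0) = (y *m diag_mx (map_mx toC d) ^+ k *m y^t*) 0 0.
  have -> : toC ((x *m S ^+ k *m x^T) 0 0) = map_mx toC (x *m S ^+ k *m x^T) 0 0.
    by rewrite [RHS]mxE.
  by rewrite !map_mxM -map_trmx -/xC SkE !mulmxA yE -mulmxA yt.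
rewrite diag_mxX mul_mx_diag mxE; apply: eq_bigr => i _.
by rewrite !mxE rmorphM rmorphXn mulrAC mulrC -sqr_normc -add_Re2_Im2.
Qed.

Lemma qform_le_lambda_max n (S : 'M[R]_n) (x : 'rV[R]_n) : S^T = S ->
  (x *m S *m x^T) 0 0 <= lambda_max S * sqnorm x.
Proof.
move=> /symmetric_qform_spectral[d [eig_d /(_ x)[w w_ge0 qE]]].
have := qE 0%N; have := qE 1%N.
rewrite /sqnorm !expr1 !expr0 -idmxE mulmx1 => -> ->.
rewrite mulr_sumr; apply: ler_sum => i _.
by rewrite expr1 expr0 mul1r ler_wpM2r ?eigenvalue_le_lambda_max.
Qed.

Lemma lambda_min_qform_le n (S : 'M[R]_n) (x : 'rV[R]_n) : S^T = S ->
  lambda_min S * (x *m S *m x^T) 0 0 <= (x *m S ^+ 2 *m x^T) 0 0.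
Proof.
move=> /symmetric_qform_spectral[d [eig_d /(_ x)[w w_ge0 qE]]].
have := qE 1%N; rewrite expr1 => ->; rewrite qE mulr_sumr.
apply: ler_sum => i _; rewrite expr1 mulrA ler_wpM2r //.
have [di_gt0 | di_le0] := ltP 0 (d 0 i).
  by rewrite expr2 ler_wpM2r ?(ltW di_gt0) ?lambda_min_le_eigenvalue.
by rewrite (le_trans _ (sqr_ge0 _)) // mulr_ge0_le0 ?lambda_min_ge0.
Qed.

End SymmetricSpectral.

Section Congruence.
Variables (R : realType) (n p : nat) (G : 'M[R]_n) (B : 'M[R]_(n, p)).
Hypothesis G_sym : G^T = G.

Lemma eigenvector_congruence_qform mu (v : 'rV[R]_p) :
  v *m (B^T *m G *m B) = mu *: v ->
  ((v *m B^T) *m G *m (v *m B^T)^T) 0 0 = mu * sqnorm v.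
Proof.
move=> eig_v; rewrite trmx_mul trmxK.
have -> : v *m B^T *m G *m (B *m v^T) = v *m (B^T *m G *m B) *m v^T.
  by rewrite !mulmxA.
by rewrite eig_v -scalemxAl mxE.
Qed.

Lemma pos_eig_congruence_le c mu :
  (forall v : 'rV_p, sqnorm (v *m B^T) <= c * sqnorm v) ->
  mu \in pos_eigs (B^T *m G *m B) -> mu <= c * lambda_max G.
Proof.
move=> B_bound; rewrite mem_pos_eigs => /andP[_ /eigenvalueP[v eig_v v_neq0]].
rewrite -(ler_pM2r (sqnorm_gt0 v_neq0)) -eigenvector_congruence_qform //.
apply: le_trans (qform_le_lambda_max _ G_sym) _.
by rewrite [c * _]mulrC -mulrA ler_wpM2l ?lambda_max_ge0 ?B_bound.
Qed.

Lemma lambda_min_le_pos_eig_congruence mu :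
  (forall z : 'rV_n, sqnorm z <= sqnorm (z *m B)) ->
  mu \in pos_eigs (B^T *m G *m B) -> lambda_min G <= mu.
Proof.
move=> B_bound; rewrite mem_pos_eigs => /andP[mu_gt0 /eigenvalueP[v eig_v v_neq0]].
set x := v *m B^T; have qx := eigenvector_congruence_qform eig_v.
have qx_gt0 : 0 < (x *m G *m x^T) 0 0 by rewrite qx mulr_gt0 ?sqnorm_gt0.
rewrite -(ler_pM2r qx_gt0); apply: le_trans (lambda_min_qform_le _ G_sym) _.
have xGB : x *m G *m B = mu *: v by rewrite /x -eig_v !mulmxA.
have -> : (x *m G ^+ 2 *m x^T) 0 0 = sqnorm (x *m G).
  by rewrite /sqnorm [(x *m G)^T]trmx_mul G_sym expr2 -mulmxE !mulmxA.
apply: le_trans (B_bound (x *m G)) _.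
by rewrite xGB qx /sqnorm linearZ /= -scalemxAl -scalemxAr !mxE.
Qed.

End Congruence.

Lemma kappa_mulmx_le (R : realType) m n p (M : 'M[R]_(m, n)) (B : 'M[R]_(n, p)) c :
  (forall v : 'rV_p, sqnorm (v *m B^T) <= c * sqnorm v) ->
  (forall z : 'rV_n, sqnorm z <= sqnorm (z *m B)) ->
  kappa (M *m B) <= Num.sqrt c * kappa M.
Proof.
move=> B_upper B_lower; rewrite kappaE.
have -> : (M *m B)^T *m (M *m B) = B^T *m (M^T *m M) *m B by rewrite trmx_mul !mulmxA.
have G_sym : (M^T *m M)^T = M^T *m M by rewrite trmx_mul trmxK.
set G := M^T *m M in G_sym *; set H := B^T *m G *m B.
case E: (pos_eigs H) => [|mu s].
  by rewrite /lambda_max E big_nil sqrtr0 mul0r mulr_ge0 ?sqrtr_ge0 ?kappa_ge0.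
have mu_in : mu \in pos_eigs H by rewrite E mem_head.
have mu_le := pos_eig_congruence_le G_sym B_upper mu_in.
have mu_gt0 := pos_eigs_gt0 mu_in.
have G_max_ge0 := lambda_max_ge0 G.
have c_ge0 : 0 <= c by nra.
have H_max : lambda_max H <= c * lambda_max G.
  rewrite [X in X <= _]/lambda_max big_seq; apply: bigmax_le => [|a a_in].
    by rewrite mulr_ge0.
  exact: (pos_eig_congruence_le G_sym B_upper a_in).
have H_min : lambda_min G <= lambda_min H.
  rewrite [X in _ <= X]/lambda_min big_seq; apply: le_bigmin => [|a a_in].
    by rewrite E /= (lambda_min_le_pos_eig_congruence G_sym B_lower mu_in).
  exact: (lambda_min_le_pos_eig_congruence G_sym B_lower a_in).
have G_min_gt0 : 0 < lambda_min G.
  apply: lambda_min_gt0; apply: contraTneq mu_le => G_empty.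
  by rewrite /lambda_max G_empty big_nil mulr0 -ltNge.
rewrite kappaE -/G mulrA -sqrtrM //; apply: ler_pM.
- exact: sqrtr_ge0.
- by rewrite invr_ge0 sqrtr_ge0.
- exact: ler_wsqrtr.
- by rewrite lef_pV2 ?posrE ?sqrtr_gt0 ?(lt_le_trans G_min_gt0) // ler_wsqrtr.
Qed.

Section Augmentation.
Variable R : realType.

Definition augment_mx n : 'M[R]_(n, n + 1) := row_mx 1%:M (- const_mx 1).

Lemma mxZtoR_AZ m n (A : 'M[int]_(m, n)) :
  mxZtoR R (AZ A) = mxZtoR R A *m augment_mx n.
Proof.
rewrite /mxZtoR /AZ /augment_mx map_row_mx mul_mx_row mulmx1; congr row_mx.
apply/matrixP => i j; rewrite !mxE rmorphN rmorph_sum -sumrN.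
by apply: eq_bigr => k _; rewrite !mxE !mulr1 mulrN1.
Qed.

Lemma sqnorm_le_mul_augment_mx n (z : 'rV[R]_n) : sqnorm z <= sqnorm (z *m augment_mx n).
Proof.
rewrite /sqnorm /augment_mx mul_mx_row mulmx1 tr_row_mx mul_row_col.
rewrite [X in _ <= X]mxE lerDl.
exact: sqnorm_ge0.
Qed.

(* |B|^2 = n + 1 <= 2n, except for n = 0 where v B^T is the empty vector. *)
Lemma sqnorm_mul_tr_augment_mx_le n (v : 'rV[R]_(n + 1)) :
  sqnorm (v *m (augment_mx n)^T) <= 2 * n%:R * sqnorm v.
Proof.
rewrite -[v]hsubmxK; move: (lsubmx v) (rsubmx v) => a t; clear v.
rewrite /augment_mx tr_row_mx mul_row_col trmx1 mulmx1 /sqnorm tr_row_mx mul_row_col.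
rewrite !mxE big_ord1 !mxE.
have -> : t *m (- const_mx 1 : 'M[R]_(n, 1))^T = - const_mx (t 0 0).
  by apply/rowP => j; rewrite !mxE big_ord1 !mxE mulrN1.
have sq_sum (u : 'rV[R]_n) : \sum_j u 0 j * u^T j 0 = \sum_j u 0 j ^+ 2.
  by apply: eq_bigr => j _; rewrite mxE expr2.
rewrite !sq_sum; move: (t 0 0) => s; clear t sq_sum.
case: n a => [|n] a; first by rewrite !big_ord0 mulr0 mul0r.
apply: (@le_trans _ _ (\sum_j 2 * (a 0 j ^+ 2 + s ^+ 2))).
  apply: ler_sum => j _; rewrite !mxE.
  suff : 0 <= (a 0 j + s) ^+ 2 by nra.
  exact: sqr_ge0.
rewrite -mulr_sumr big_split /= sumr_const card_ord -mulr_natr.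
have a_ge0 : 0 <= \sum_j a 0 j ^+ 2 by rewrite sumr_ge0 // => j _; rewrite sqr_ge0.
have n_ge1 : 1 <= n.+1%:R :> R by rewrite ler1n.
have s_ge0 := sqr_ge0 s; nra.
Qed.

End Augmentation.

Theorem lemma7p8 (R : realType) :
  exists C : R, forall (m n : nat) (A : 'M[int]_(m, n)),
    (forall i : 'I_m, exists j : 'I_n, A i j != 0) ->
    (forall j : 'I_n, exists i : 'I_m, A i j != 0) ->
    kappa (mxZtoR R (AZ A)) <= C * Num.sqrt (n%:R ^+ 3) * kappa (mxZtoR R A).
Proof.
exists 2 => m n A _ _; rewrite mxZtoR_AZ.
apply: le_trans (kappa_mulmx_le _ (@sqnorm_mul_tr_augment_mx_le R n)
                   (@sqnorm_le_mul_augment_mx R n)) _.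
rewrite ler_wpM2r ?kappa_ge0 //.
have sqrt_sqr2 : Num.sqrt (2 ^+ 2) = 2 :> R by rewrite sqrtr_sqr ger0_norm.
rewrite -{2}sqrt_sqr2 -sqrtrM ?exprn_ge0 // ler_wsqrtr // -!natrX -!natrM ler_nat.
by rewrite leq_mul //; case: n {A} => // n; rewrite expnS leq_pmulr ?expn_gt0.
Qed.
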